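(* Let $\pi$ be the policy induced by Dual Gradient Descent with Proxy Assignments with stepsize $\eta=\Theta(\sqrt{K/T})$. Then for every $k\in[K]$, $\mathbb E\big[\widetilde{\textsc{Reg}}_k[\omega_k]\big]=O(\sqrt{T/K})$.
   Context: Model. There are $m$ resources and $n$ arrival types; type $j$ has cost vector $c_j\in\mathbb R^m$ and allowed resources $\mathcal S_j\subseteq[m]$, $\max_{i,j}|c_{ji}|<\infty$. The horizon has $T$ periods partitioned into $K=\Theta(1)$ epochs ($T$ a multiple of $K$), epoch $k$ being $\mathcal T_k=\{(k-1)T/K+1,\dots,kT/K\}$. In period $t$ one arrival of type $j^t$ occurs, $j^1,\dots,j^T$ i.i.d. with $\mathbb P(j^t=j)=p_j$, $p$ not depending on $T$ and unknown to the decision-maker; $\omega_k=(j^t)_{t\in\mathcal T_k}$, $\Lambda_j(t_1:t_2)=\sum_{t_1<\tau\le t_2}\mathbf 1\{j^\tau=j\}$. Feasible decisions: $\mathcal X^t=\{x\in\{0,1\}^m:\sum_ix_i\le1,\ x_i=0\ \forall i\notin\mathcal S_{j^t}\}$. $Z^\pi_{ji}(t)$ counts type-$j$ arrivals assigned to $i$ in periods $1..t$. Each epoch $k$ and resource $i$ has a target $\rho_{ki}\in[0,1]$ and convex $L$-Lipschitz $g_{ki}:[0,1]\to\mathbb R_{\ge0}$ with $g_{ki}(\rho_{ki})=0$. Expectations over arrivals and algorithm decisions; $O(\cdot)$ as $T\to\infty$. Dual Gradient Descent with Proxy Assignments (stepsize $\eta$, initial $\mu^1\in\mathbb R^{K\times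 m}$): for $t=1,\dots,T$, with $k$ the epoch of $t$: if $t=(k-1)T/K+1$ set $\mu^t_{k'}=\mu^1_{k'}$ for $k'\ge k$; observe $j=j^t$; for every $k'\ge k$ compute $\tilde x^t_{k'}\in\arg\min_{x\in\mathcal X^t}\sum_ix_i(c_{ji}-\mu^t_{k'i})$; implement $x^t=\tilde x^t_k$; compute $a^t\in\arg\min_{a\in[0,1]^{(K+1-k)\times m}}\sum_{k'\ge k}k'\sum_ig_{k'i}\big(\frac{\sum_{t'\le(k-1)T/K}x^{t'}_i}{k'T/K}+\sum_{k''=k}^{k'}\frac{a_{k''i}}{k'}\big)+\sum_{k'\ge k}\sum_i\mu^t_{k'i}a_{k'i}$; update $\mu^{t+1}_{k'}=\mu^t_{k'}+\eta(a^t_{k'}-\tilde x^t_{k'})$ for $k'\ge k$. Proxy quantities. For $k\le k_1\le k_2\le K$: $\widetilde Z^\pi_{ji,k}\big(\frac{(k_1-1)T}K:\frac{k_2T}K\big)=\sum_{t\in\mathcal T_k}\sum_{k''=k_1}^{k_2}\tilde x^t_{k''i}\mathbf 1\{j^t=j\}$, $\widetilde Z^\pi_{i,k}=\sum_j\widetilde Z^\pi_{ji,k}$. Cumulative proxy cost: $\widetilde V^\pi_k[\omega_k\mid z]=\sum_{j,i}c_{ji}\widetilde Z^\pi_{ji,k}\big(\frac{(k-1)T}K:T\big)+\frac TK\sum_{k'\ge k}\sum_ik'g_{k'i}\Big(\frac{z_i+\widetilde Z^\pi_{i,k}((k-1)T/K:k'T/K)}{k'T/K}\Big)$. Proxy offline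 optimum $\widetilde V^{\textsc{off}}_k[\omega_k\mid z]$: the minimum over nonnegative integers $Z^{(k')}_{ji}$ ($k'\ge k$), zero for $i\notin\mathcal S_j$, with $\sum_iZ^{(k')}_{ji}\le\Lambda_j\big(\frac{(k-1)T}K:\frac{kT}K\big)$ for all $j,k'\ge k$, of $\sum_{j,i}c_{ji}\sum_{k'\ge k}Z^{(k')}_{ji}+\frac TK\sum_{k'\ge k}\sum_ik'g_{k'i}\Big(\frac{z_i+\sum_j\sum_{k''=k}^{k'}Z^{(k'')}_{ji}}{k'T/K}\Big)$. Proxy regret: $\widetilde{\textsc{Reg}}_k[\omega_k]=\widetilde V^\pi_k[\omega_k\mid Z^\pi((k-1)T/K)]-\widetilde V^{\textsc{off}}_k[\omega_k\mid Z^\pi((k-1)T/K)]$ (with $Z^\pi(0)=0$). *)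

From HB Require Import structures.
From mathcomp Require Import all_boot all_order all_algebra.
From mathcomp Require Import reals.

Set Implicit Arguments.
Unset Strict Implicit.
Unset Printing Implicit Defensive.

Import Order.TTheory GRing.Theory Num.Theory.
Local Open Scope ring_scope.

(* Conventions (0-based):
   - resources 'I_m, arrival types 'I_n, epochs 'I_K; the paper's epoch
     k (1-based) is our k : 'I_K with k.+1 = paper k.
   - T = K * N, N = T/K periods per epoch; periods t = 0 .. T-1 (paper t+1);
     epoch of t is t %/ N; epoch k consists of periods k*N <= t < k.+1*N.
   - a decision x in X^t (0/1 vector, at most one 1, supported on S_j) is
     encoded as o : option 'I_m (None = reject, Some i = assign to i),
     with 0/1 vector xvec o. *)

Section Model.
Variable R : realType.
Variables (m n K N : nat).
Variable c : 'I_n -> 'I_m -> R.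
Variable S : 'I_n -> {set 'I_m}.
Variable g : 'I_K -> 'I_m -> R -> R.

Definition xvec (o : option 'I_m) : 'I_m -> R :=
  fun i => if o == Some i then 1 else 0.

(* o encodes an element of X^t when j^t = j *)
Definition allowed (j : 'I_n) (o : option 'I_m) : bool :=
  if o is Some i then i \in S j else true.

Definition dec_cost (j : 'I_n) (mu : 'I_m -> R) (o : option 'I_m) : R :=
  \sum_(i < m) xvec o i * (c j i - mu i).

Definition is_xsel
  (selX : nat -> 'I_K -> 'I_n -> ('I_m -> R) -> option 'I_m) : Prop :=
  forall t k' j mu, allowed j (selX t k' j mu) /\
    forall o, allowed j o -> dec_cost j mu (selX t k' j mu) <= dec_cost j mu o.

(* objective defining a^t in epoch k, given z = sum_{t' <= (k-1)T/K} x^{t'} *)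
Definition aobj (k : nat) (z : 'I_m -> R) (mu a : 'I_K -> 'I_m -> R) : R :=
  \sum_(k' : 'I_K | (k <= k')%N)
     (k'.+1)%:R * \sum_(i < m)
        g k' i (z i / (k'.+1 * N)%N%:R
                + \sum_(k'' : 'I_K | ((k <= k'') && (k'' <= k'))%N) a k'' i / (k'.+1)%:R)
  + \sum_(k' : 'I_K | (k <= k')%N) \sum_(i < m) mu k' i * a k' i.

Definition in_box (k : nat) (a : 'I_K -> 'I_m -> R) : Prop :=
  forall (k' : 'I_K) (i : 'I_m), (k <= k')%N -> 0 <= a k' i <= 1.

(* selA t k z mu : an element a^t of the argmin over [0,1]^{(K+1-k) x m}
   (only the coordinates k' >= k are meaningful).  Required for every
   usage vector z that can occur (0 <= z_i <= k*N). *)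
Definition is_asel
  (selA : nat -> nat -> ('I_m -> R) -> ('I_K -> 'I_m -> R) -> ('I_K -> 'I_m -> R))
  : Prop :=
  forall t k z mu, (forall i, 0 <= z i <= (k * N)%N%:R) ->
    in_box k (selA t k z mu) /\
    forall a, in_box k a -> aobj k z mu (selA t k z mu) <= aobj k z mu a.

Variable eta : R.
Variable mu1 : 'I_K -> 'I_m -> R.
Variable selX : nat -> 'I_K -> 'I_n -> ('I_m -> R) -> option 'I_m.
Variable selA : nat -> nat -> ('I_m -> R) -> ('I_K -> 'I_m -> R) -> ('I_K -> 'I_m -> R).
Variable w : {ffun 'I_(K * N) -> 'I_n}.

Definition arrv (t : nat) : option 'I_n := omap w (insub t).

(* algorithm state before period t:
   dual variables mu, cumulative actual usage U, usage at start of current epoch Z0 *)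
Record st := St { smu : 'I_K -> 'I_m -> R; sU : 'I_m -> R; sZ0 : 'I_m -> R }.

Definition reset (t : nat) (s : st) : st :=
  if (t %% N == 0)%N then
    St (fun k' i => if (t %/ N <= k')%N then mu1 k' i else smu s k' i) (sU s) (sU s)
  else s.

Definition xsel (t : nat) (s : st) (k' : 'I_K) : option 'I_m :=
  if arrv t is Some j then selX t k' j (smu s k') else None.

Definition step (t : nat) (s : st) : st :=
  let s' := reset t s in
  let e := (t %/ N)%N in
  let a := selA t e (sZ0 s') (smu s') in
  St (fun k' i => if (e <= k')%N then smu s' k' i + eta * (a k' i - xvec (xsel t s' k') i)
                  else smu s' k' i)
     (fun i => sU s' i + \sum_(k' : 'I_K | nat_of_ord k' == e) xvec (xsel t s' k') i)
     (sZ0 s').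

Fixpoint run (t : nat) : st :=
  if t is t'.+1 then step t' (run t') else St mu1 (fun=> 0) (fun=> 0).

Definition xt (t : nat) (k' : 'I_K) : option 'I_m := xsel t (reset t (run t)) k'.

Definition Zbefore (k : nat) : 'I_m -> R := sU (run (k * N)).

Definition ZtilJ (k : nat) (j : 'I_n) (i : 'I_m) : R :=
  \sum_(k * N <= t < k.+1 * N)
     \sum_(k'' : 'I_K | (k <= k'')%N) xvec (xt t k'') i * (arrv t == Some j)%:R.

Definition Ztil (k : nat) (k' : 'I_K) (i : 'I_m) : R :=
  \sum_(j < n) \sum_(k * N <= t < k.+1 * N)
     \sum_(k'' : 'I_K | ((k <= k'') && (k'' <= k'))%N) xvec (xt t k'') i * (arrv t == Some j)%:R.

Definition Vpi (k : nat) (z : 'I_m -> R) : R :=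
  \sum_(j < n) \sum_(i < m) c j i * ZtilJ k j i
  + N%:R * \sum_(k' : 'I_K | (k <= k')%N) \sum_(i < m)
        (k'.+1)%:R * g k' i ((z i + Ztil k k' i) / (k'.+1 * N)%N%:R).

Definition Lam (k : nat) (j : 'I_n) : nat :=
  (\sum_(k * N <= t < k.+1 * N) (arrv t == Some j))%N.

(* offline candidates Z^{(k')}_{ji}; values are nonnegative integers, bounded
   by N (as forced by the constraints sum_i Z <= Lambda_j <= N) *)
Definition offobj (k : nat) (z : 'I_m -> R) (Z : {ffun 'I_K * 'I_n * 'I_m -> 'I_N.+1}) : R :=
  \sum_(j < n) \sum_(i < m) c j i * \sum_(k' : 'I_K | (k <= k')%N) (Z (k', j, i) : nat)%:R
  + N%:R * \sum_(k' : 'I_K | (k <= k')%N) \sum_(i < m)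
      (k'.+1)%:R * g k' i ((z i + \sum_(j < n) \sum_(k'' : 'I_K | ((k <= k'') && (k'' <= k'))%N)
                                      (Z (k'', j, i) : nat)%:R) / (k'.+1 * N)%N%:R).

Definition off_feasible (k : nat) (Z : {ffun 'I_K * 'I_n * 'I_m -> 'I_N.+1}) : bool :=
  [forall k' : 'I_K, (k <= k')%N ==>
     [forall j : 'I_n, [forall i : 'I_m, (i \notin S j) ==> (Z (k', j, i) == 0 :> nat)]
        && (\sum_(i < m) (Z (k', j, i) : nat) <= Lam k j)%N]].

(* minimum over feasible Z (Z = 0 is always feasible) *)
Definition Voff (k : nat) (z : 'I_m -> R) : R :=
  \big[Num.min/offobj k z [ffun=> ord0]]_(Z | off_feasible k Z) offobj k z Z.

Definition proxy_reg (k : nat) : R := Vpi k (Zbefore k) - Voff k (Zbefore k).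

End Model.

Definition exp_proxy_reg (R : realType) (m n K N : nat) (c : 'I_n -> 'I_m -> R)
  (S : 'I_n -> {set 'I_m}) (g : 'I_K -> 'I_m -> R -> R) (p : 'I_n -> R)
  (eta : R) (mu1 : 'I_K -> 'I_m -> R)
  (selX : nat -> 'I_K -> 'I_n -> ('I_m -> R) -> option 'I_m)
  (selA : nat -> nat -> ('I_m -> R) -> ('I_K -> 'I_m -> R) -> ('I_K -> 'I_m -> R))
  (k : nat) : R :=
  \sum_(w : {ffun 'I_(K * N) -> 'I_n})
     (\prod_(t : 'I_(K * N)) p (w t)) * proxy_reg c S g eta mu1 selX selA w k.

From HB Require Import structures.
From mathcomp Require Import all_boot all_order all_algebra.
From mathcomp Require Import reals.
From mathcomp Require Import ring lra zify.
Set Implicit Arguments. Unset Strict Implicit. Unset Printing Implicit Defensive.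
Import Order.TTheory GRing.Theory Num.Theory.
Local Open Scope ring_scope.

(* Fix the epoch k; the arrivals before it determine the starting usage z.
   Let D_j(mu) be the Lagrangian dual value of one type-j arrival: the best
   reduced cost of every proxy decision plus the optimum of the a-subproblem.
   - Pathwise, Jensen's inequality over the N = T/K periods of the epoch and
     the Lipschitz continuity of g bound the proxy cost by sum_t D_{j^t}(mu^t),
     up to the regret of the dual gradient steps on the linear losses
     mu |-> mu (a^t - x~^t), which is O(1/eta + eta N) per coordinate.
   - Weak duality: for every fixed mu, sum_t D_{j^t}(mu) is at most the proxy
     offline optimum.
   - mu^t only depends on the arrivals before t, so E D_{j^t}(mu^t) =
     E sum_j p_j D_j(mu^t). Each D_j is concave, so summing over t gives at
     most N sum_j p_j D_j at the averaged dual, hence at most its value at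
     the best averaged dual mu* over the arrival sequences with the same
     history before epoch k. As mu* is independent of the arrivals of epoch
     k, this is E sum_t D_{j^t} at mu*, which weak duality bounds by the
     expected offline optimum.
   With eta = Theta(1/sqrt N) the regret term is O(sqrt N) = O(sqrt (T/K)). *)


(* [field] normalizes [k.+1%:R] to [1 + k%:R]. *)
Lemma natrS_neq0 (R : numDomainType) k : 1 + k%:R != 0 :> R.
Proof. by rewrite addrC natr1 pnatr_eq0. Qed.

Section RealLemmas.
Variable R : realFieldType.

Definition convex01 (f : R -> R) : Prop :=
  forall x y l, 0 <= x <= 1 -> 0 <= y <= 1 -> 0 <= l <= 1 ->
    f (l * x + (1 - l) * y) <= l * f x + (1 - l) * f y.

Definition lipschitz01 (L : R) (f : R -> R) : Prop :=
  forall x y, 0 <= x <= 1 -> 0 <= y <= 1 -> `|f x - f y| <= L * `|x - y|.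

Lemma lipschitz01_ge0 L (f : R -> R) : lipschitz01 L f -> 0 <= L.
Proof.
move=> /(_ 0 1); rewrite !lexx ler01 sub0r normrN normr1 mulr1 => /(_ isT isT).
exact: le_trans (normr_ge0 _).
Qed.

Lemma sum01_le n (y : nat -> R) : (forall s, (s < n)%N -> 0 <= y s <= 1) ->
  0 <= \sum_(s < n) y s <= n%:R.
Proof.
move=> hy; apply/andP; split.
  by apply: sumr_ge0 => s _; case/andP: (hy s (ltn_ord s)).
rewrite -[n in n%:R]card_ord -sumr_const; apply: ler_sum => s _.
by case/andP: (hy s (ltn_ord s)).
Qed.

Lemma convex01_avg_le (f : R -> R) n (y : nat -> R) :
  convex01 f -> (forall s, (s < n)%N -> 0 <= y s <= 1) ->
  n%:R * f ((\sum_(s < n) y s) / n%:R) <= \sum_(s < n) f (y s).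
Proof.
move=> f_cvx; elim: n y => [|n IH] y hy; first by rewrite !big_ord0 mul0r.
rewrite !big_ord_recr /=.
have /andP[A_ge0 A_le] := sum01_le (fun s hs => hy s (ltnW hs)).
set A := \sum_(s < n) y s in A_ge0 A_le *.
have IHn := IH y (fun s hs => hy s (ltnW hs)); rewrite -/A in IHn.
have hyn := hy n (ltnSn n).
have [n0|n_gt0] := posnP n.
  by subst n; move: IHn; rewrite /A !big_ord0 add0r mul1r divr1 mul0r; lra.
have n_pos : 0 < n%:R :> R by rewrite ltr0n.
have n1_pos : 0 < n.+1%:R :> R by rewrite ltr0n.
(* The new average is a convex combination of the old average and [y n]. *)
pose l : R := n%:R / n.+1%:R.
have hl : 0 <= l <= 1.
  by rewrite divr_ge0 ?ler_pdivrMr ?mul1r ?ler_nat //= ltW.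
have havg : 0 <= A / n%:R <= 1 by rewrite divr_ge0 ?ler_pdivrMr ?mul1r //= ltW.
have -> : (A + y n) / n.+1%:R = l * (A / n%:R) + (1 - l) * y n.
  by rewrite /l; field; rewrite natrS_neq0 lt0r_neq0.
have := f_cvx _ _ _ havg hyn hl; rewrite -(ler_pM2l n1_pos).
have -> : n.+1%:R * (l * f (A / n%:R) + (1 - l) * f (y n)) =
          n%:R * f (A / n%:R) + f (y n).
  by rewrite /l; field; rewrite natrS_neq0.
lra.
Qed.

Lemma card_window K k k' : (\sum_(x < K | k <= x <= k') 1 <= minn K k'.+1 - k)%N.
Proof.
elim: K => [|K IH]; first by rewrite big_ord0.
rewrite big_mkcond big_ord_recr /= -big_mkcond /=.
move: IH; set X := (\sum_(x < K | _) _)%N; clearbody X.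
by case: ifP => [/andP[]|_]; lia.
Qed.

Lemma sum_window_le K (F : 'I_K -> R) (k k' : nat) :
  (forall x : 'I_K, (k <= x)%N -> 0 <= F x <= 1) ->
  \sum_(x : 'I_K | (k <= x <= k')%N) F x <= (k'.+1 - k)%:R.
Proof.
move=> hF; apply: (@le_trans _ _ (\sum_(x : 'I_K | (k <= x <= k')%N) 1%N%:R)).
  by apply: ler_sum => x /andP[hx _]; case/andP: (hF x hx).
by rewrite -natr_sum ler_nat (leq_trans (card_window K k k')) ?leq_sub2r ?geq_minr.
Qed.

Lemma sqr_telescope (eta nu : R) (u G : nat -> R) N :
  (forall s, (s < N)%N -> u s.+1 = u s + eta * G s) ->
  2 * eta * \sum_(s < N) (u s - nu) * G s + eta ^+ 2 * \sum_(s < N) G s ^+ 2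
  = (u N - nu) ^+ 2 - (u 0%N - nu) ^+ 2.
Proof.
elim: N => [|N IH] hu; first by rewrite !big_ord0; ring.
have := IH (fun s hs => hu s (ltnW hs)).
by rewrite !big_ord_recr /= hu //; lra.
Qed.

(* Regret of the gradient steps [u (s+1) = u s + eta G s] against the best
   constant comparator in [[-M, M]]. *)
Lemma linear_regret_le (eta M : R) (u G : nat -> R) N :
  0 < eta -> 0 <= M ->
  (forall s, (s < N)%N -> u s.+1 = u s + eta * G s) ->
  (forall s, (s < N)%N -> -1 <= G s <= 1) ->
  M * `|\sum_(s < N) G s| - \sum_(s < N) u s * G s
    <= (u 0%N ^+ 2 + M ^+ 2) / eta + eta * N%:R / 2.
Proof.
move=> eta_gt0 M_ge0 hu hG.
have sumG2 : \sum_(s < N) G s ^+ 2 <= N%:R.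
  rewrite -[N in N%:R]card_ord -sumr_const; apply: ler_sum => s _.
  by rewrite -real_normK ?num_real // exprn_ile1 // ler_norml hG.
set SG := \sum_(s < N) G s.
pose nu := if 0 <= SG then M else - M.
have nuE : M * `|SG| = nu * SG.
  rewrite /nu; case: ifP => h; first by rewrite ger0_norm.
  by rewrite ltr0_norm ?mulrN ?mulNr // ltNge h.
have nu2 : nu ^+ 2 = M ^+ 2 by rewrite /nu; case: ifP => _; ring.
have := sqr_telescope nu hu.
have -> : \sum_(s < N) (u s - nu) * G s = \sum_(s < N) u s * G s - nu * SG.
  by rewrite /SG mulr_sumr -sumrB; apply: eq_bigr => s _; ring.
move=> telescope.
have regret : 2 * eta * (nu * SG - \sum_(s < N) u s * G s)
              <= (u 0%N - nu) ^+ 2 + eta ^+ 2 * N%:R.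
  have : eta ^+ 2 * \sum_(s < N) G s ^+ 2 <= eta ^+ 2 * N%:R.
    by rewrite ler_pM2l // exprn_gt0.
  have := sqr_ge0 (u N - nu); lra.
have init : (u 0%N - nu) ^+ 2 <= 2 * (u 0%N ^+ 2 + M ^+ 2).
  by rewrite -nu2; have := sqr_ge0 (u 0%N + nu); lra.
rewrite nuE -(ler_pM2l (_ : 0 < 2 * eta)) ?mulr_gt0 //.
have -> : 2 * eta * ((u 0%N ^+ 2 + M ^+ 2) / eta + eta * N%:R / 2) =
          2 * (u 0%N ^+ 2 + M ^+ 2) + eta ^+ 2 * N%:R.
  by field; rewrite lt0r_neq0.
lra.
Qed.

Lemma stepsize_tradeoff_le (a e q c1 c2 : R) :
  0 <= a -> 0 < q -> 0 < c1 -> c1 / q <= e -> e <= c2 / q ->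
  a / e + e * q ^+ 2 / 2 <= q * (a / c1 + c2 / 2).
Proof.
move=> a_ge0 q_gt0 c1_gt0 e_lo e_hi.
have e_gt0 : 0 < e by apply: lt_le_trans e_lo; apply: divr_gt0.
have qe_ge : c1 <= q * e by move: e_lo; rewrite ler_pdivrMr // mulrC.
have eq_le : e * q <= c2 by move: e_hi; rewrite ler_pdivlMr.
rewrite mulrDr lerD //.
  rewrite ler_pdivrMr //.
  have -> : q * (a / c1) * e = a * ((q * e) / c1) by field; rewrite lt0r_neq0.
  by rewrite -[X in X <= _]mulr1 ler_wpM2l // ler_pdivlMr // mul1r.
have -> : e * q ^+ 2 / 2 = q * (e * q / 2) by rewrite expr2; field.
by rewrite ler_wpM2l ?(ltW q_gt0) // ler_pM2r // invr_gt0 ltr0n.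
Qed.

End RealLemmas.

Lemma big_nat_epoch (R : nmodType) k N (F : nat -> R) :
  \sum_(k * N <= t < k.+1 * N) F t = \sum_(s < N) F (k * N + s)%N.
Proof.
rewrite -{1}[(k * N)%N]add0n big_addn mulSn addnK big_mkord.
by apply: eq_bigr => s _; rewrite addnC.
Qed.

Lemma sum_mul_eq (R : pzSemiRingType) n (F : 'I_n -> R) j0 :
  \sum_(j < n) F j * (j0 == j)%:R = F j0.
Proof.
rewrite (bigD1 j0) //= eqxx mulr1 big1 ?addr0 // => j hj.
by rewrite eq_sym (negbTE hj) mulr0.
Qed.

Lemma sum_eq1 (R : pzSemiRingType) n (j0 : 'I_n) : \sum_(j < n) (j0 == j)%:R = 1 :> R.
Proof.
transitivity (\sum_(j < n) 1 * (j0 == j)%:R : R); last exact: sum_mul_eq.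
by apply: eq_bigr => j _; rewrite mul1r.
Qed.

Section ProductProbability.
Variables (R : numDomainType) (T n : nat) (p : 'I_n -> R).

Definition upd (w : {ffun 'I_T -> 'I_n}) (t0 : 'I_T) (j : 'I_n) : {ffun 'I_T -> 'I_n} :=
  [ffun t => if t == t0 then j else w t].

Definition pw (w : {ffun 'I_T -> 'I_n}) : R := \prod_(t < T) p (w t).

Definition expect (f : {ffun 'I_T -> 'I_n} -> R) : R := \sum_w pw w * f w.

Lemma expectD f f' : expect (fun w => f w + f' w) = expect f + expect f'.
Proof. by rewrite /expect -big_split; apply: eq_bigr => w _; rewrite mulrDr. Qed.

Lemma expectB f f' : expect (fun w => f w - f' w) = expect f - expect f'.
Proof. by rewrite /expect -sumrB; apply: eq_bigr => w _; rewrite mulrBr. Qed.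

Lemma expect_sum I (r : seq I) (F : I -> {ffun 'I_T -> 'I_n} -> R) :
  expect (fun w => \sum_(s <- r) F s w) = \sum_(s <- r) expect (F s).
Proof. by rewrite /expect exchange_big; apply: eq_bigr => w _; rewrite mulr_sumr. Qed.

Lemma upd_eq w t0 j : upd w t0 j t0 = j.
Proof. by rewrite ffunE eqxx. Qed.

Lemma upd_restore w t0 j : upd (upd w t0 j) t0 (w t0) = w.
Proof. by apply/ffunP => t; rewrite !ffunE; case: eqVneq => [->|]. Qed.

Lemma pw_upd w t0 j : pw (upd w t0 j) * p (w t0) = pw w * p j.
Proof.
rewrite /pw [\prod_(t < T) p (upd w t0 j t)](bigD1 t0) //.
rewrite [\prod_(t < T) p (w t)](bigD1 t0) //= upd_eq.
rewrite (eq_bigr (fun t => p (w t))) => [|t ht]; last by rewrite ffunE (negbTE ht).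
ring.
Qed.

Hypothesis p_sum1 : \sum_(j < n) p j = 1.

Lemma sum_pw : \sum_w pw w = 1.
Proof.
rewrite /pw -(bigA_distr_bigA (fun _ j => p j)) /=.
by under eq_bigr do rewrite p_sum1; rewrite big1.
Qed.

Lemma expect_cst x : expect (fun=> x) = x.
Proof. by rewrite /expect -mulr_suml sum_pw mul1r. Qed.

Lemma expect_indep (F : {ffun 'I_T -> 'I_n} -> 'I_n -> R) (t0 : 'I_T) :
  (forall w j j', F (upd w t0 j') j = F w j) ->
  expect (fun w => F w (w t0)) = expect (fun w => \sum_(j < n) p j * F w j).
Proof.
move=> hF.
pose G (x : {ffun 'I_T -> 'I_n} * 'I_n) := pw x.1 * p x.2 * F x.1 (x.1 t0).
(* Reindexing the pairs [(w, j)] by [(upd w t0 j, w t0)] preserves the weight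
   [pw w * p j]. *)
pose phi (x : {ffun 'I_T -> 'I_n} * 'I_n) := (upd x.1 t0 x.2, x.1 t0).
have phi_inj : injective phi.
  move=> [w1 j1] [w2 j2] [e1 e2].
  have := congr1 (fun w => upd w t0 (w1 t0)) e1.
  rewrite upd_restore e2 upd_restore => ->.
  by have := congr1 (fun w : {ffun 'I_T -> 'I_n} => w t0) e1; rewrite !upd_eq => ->.
transitivity (\sum_x G x).
  rewrite -(pair_bigA _ (fun w j => G (w, j))); apply: eq_bigr => w _.
  by rewrite -[LHS]mulr1 -p_sum1 mulr_sumr; apply: eq_bigr => j _; rewrite /G /=; ring.
rewrite (reindex_inj phi_inj) -(pair_bigA _ (fun w j => G (phi (w, j)))).
apply: eq_bigr => w _; rewrite mulr_sumr; apply: eq_bigr => j _.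
by rewrite /G /= upd_eq hF pw_upd mulrA.
Qed.

Lemma ler_expect f f' : (forall j, 0 <= p j) -> (forall w, f w <= f' w) ->
  expect f <= expect f'.
Proof. by move=> p_ge0 le_f; apply: ler_sum => w _; rewrite ler_wpM2l ?prodr_ge0. Qed.

End ProductProbability.

Section Dynamics.
Variables (R : realType) (m n K N : nat).
Variables (c : 'I_n -> 'I_m -> R) (S : 'I_n -> {set 'I_m}).
Variable g : 'I_K -> 'I_m -> R -> R.
Variables (eta : R) (mu1 : 'I_K -> 'I_m -> R).
Variable selX : nat -> 'I_K -> 'I_n -> ('I_m -> R) -> option 'I_m.
Variable selA : nat -> nat -> ('I_m -> R) -> ('I_K -> 'I_m -> R) -> ('I_K -> 'I_m -> R).

Local Notation state := (run eta mu1 selX selA).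
Local Notation arrivals := {ffun 'I_(K * N) -> 'I_n}.

Lemma arrv_ord (w : arrivals) (t : 'I_(K * N)) : arrv w t = Some (w t).
Proof. by rewrite /arrv valK. Qed.

Lemma run_prefix (w w' : arrivals) t :
  (forall s, (s < t)%N -> arrv w s = arrv w' s) -> state w t = state w' t.
Proof.
elim: t => [//|t IH] h /=.
by rewrite IH => [|s hs]; [rewrite /step /xsel h | exact/h/ltnW].
Qed.

Lemma xvec01 (o : option 'I_m) i : 0 <= xvec R o i <= 1.
Proof. by rewrite /xvec; case: ifP; rewrite ?lexx ?ler01. Qed.

Lemma usage_bound (w : arrivals) t i : 0 <= sU (state w t) i <= t%:R.
Proof.
elim: t => [|t IH] /=; first by rewrite lexx.
have -> : sU (reset N mu1 t (state w t)) = sU (state w t) by rewrite /reset; case: ifP.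
set F := fun k' => xvec R (xsel selX w t (reset N mu1 t (state w t)) k') i.
have : 0 <= \sum_(k' < K | nat_of_ord k' == (t %/ N)%N) F k' <= 1.
  have [lt_tK|le_Kt] := ltnP (t %/ N) K.
    by rewrite (big_pred1 (Ordinal lt_tK)) ?xvec01.
  rewrite big_pred0 ?lexx ?ler01 // => k'; apply/negbTE.
  by rewrite neq_ltn (leq_trans (ltn_ord k') le_Kt).
by rewrite -natr1; move: IH; lra.
Qed.

Section Epoch.
Variable k : nat.
Hypotheses (k_lt_K : (k < K)%N) (N_gt0 : (0 < N)%N).

Lemma N_pos : 0 < N%:R :> R.
Proof. by rewrite ltr0n. Qed.

Lemma epoch_lt s : (s < N)%N -> (k * N + s < K * N)%N.
Proof.
move=> hs; apply: (@leq_trans (k.+1 * N)); first by rewrite mulSn addnC ltn_add2r.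
by rewrite leq_mul2r k_lt_K orbT.
Qed.

Definition period_ord (s : 'I_N) : 'I_(K * N) := Ordinal (epoch_lt (ltn_ord s)).

Lemma epoch_div s : (s < N)%N -> ((k * N + s) %/ N = k)%N.
Proof. by move=> hs; rewrite divnMDl // divn_small // addn0. Qed.

Lemma epoch_mod_neq0 s : (0 < s < N)%N -> ((k * N + s) %% N != 0)%N.
Proof. by case/andP=> s_gt0 hs; rewrite modnMDl modn_small // -lt0n. Qed.

Lemma reset_usage_epoch (w : arrivals) s : (s < N)%N ->
  sZ0 (reset N mu1 (k * N + s) (state w (k * N + s))) = Zbefore eta mu1 selX selA w k.
Proof.
elim: s => [|s IH] hs; first by rewrite addn0 /reset modnMl eqxx.
by rewrite /reset (negbTE (epoch_mod_neq0 _)) ?hs // addnS /= IH // ltnW.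
Qed.

(* The dual variable for target epoch [k'] used at the [s]-th period of epoch
   [k]; at [s = 0] the stored state still has to be reset to [mu1]. *)
Definition dual_seq (w : arrivals) (k' : 'I_K) (i : 'I_m) (s : nat) : R :=
  if s is 0 then mu1 k' i else smu (state w (k * N + s)) k' i.

Lemma reset_dual_epoch (w : arrivals) s (k' : 'I_K) i : (s < N)%N -> (k <= k')%N ->
  smu (reset N mu1 (k * N + s) (state w (k * N + s))) k' i = dual_seq w k' i s.
Proof.
case: s => [|s] hs hk; first by rewrite /= addn0 /reset modnMl eqxx /= mulnK // hk.
by rewrite /reset (negbTE (epoch_mod_neq0 _)) ?hs.
Qed.

Lemma dual_seq_step (w : arrivals) s (k' : 'I_K) i : (s < N)%N -> (k <= k')%N ->
  let t := (k * N + s)%N in let st := reset N mu1 t (state w t) in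
  dual_seq w k' i s.+1 = dual_seq w k' i s
    + eta * (selA t k (Zbefore eta mu1 selX selA w k) (smu st) k' i
             - xvec R (xsel selX w t st k') i).
Proof.
move=> hs hk t st; rewrite -(reset_dual_epoch w i hs hk) /= addnS /= -/t -/st.
by rewrite /step /= epoch_div // hk reset_usage_epoch.
Qed.

(* Lagrangian dual function of a single type-[j] arrival at dual [mu]; the
   selections of period [0] are minimizers like those of any other period. *)
Definition dual_value (z : 'I_m -> R) (mu : 'I_K -> 'I_m -> R) (j : 'I_n) : R :=
  \sum_(k' : 'I_K | (k <= k')%N) dec_cost c j (mu k') (selX 0 k' j (mu k'))
  + aobj N g k z mu (selA 0 k z mu).

Hypotheses (hX : is_xsel c S selX) (hA : is_asel N g selA).

Lemma dec_cost_sel j mu t k' :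
  dec_cost c j mu (selX t k' j mu) = dec_cost c j mu (selX 0 k' j mu).
Proof.
have [? min_t] := hX t k' j mu; have [? min_0] := hX 0 k' j mu.
by apply/le_anti; rewrite min_t // min_0.
Qed.

Lemma aobj_sel z mu t : (forall i, 0 <= z i <= (k * N)%N%:R) ->
  aobj N g k z mu (selA t k z mu) = aobj N g k z mu (selA 0 k z mu).
Proof.
move=> hz; have [? min_t] := hA t mu hz; have [? min_0] := hA 0 mu hz.
by apply/le_anti; rewrite min_t // min_0.
Qed.

Lemma dec_cost_Some j mu (i : 'I_m) : dec_cost c j mu (Some i) = c j i - mu i.
Proof.
rewrite /dec_cost (bigD1 i) //= /xvec eqxx mul1r big1 ?addr0 // => i' hi'.
by rewrite (inj_eq (@Some_inj _)) eq_sym (negbTE hi') mul0r.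
Qed.

Lemma scaled_dec_cost_le (cnt : R) j mu (k' : 'I_K) (Zj : 'I_m -> nat) :
  (forall i, i \notin S j -> Zj i = 0%N) -> \sum_(i < m) (Zj i)%:R <= cnt ->
  cnt * dec_cost c j mu (selX 0 k' j mu) <= \sum_(i < m) (c j i - mu i) * (Zj i)%:R.
Proof.
move=> Zj_S Zj_le; have [_ sel_min] := hX 0 k' j mu.
set d := dec_cost c j mu _.
have d_le0 : d <= 0.
  by apply: le_trans (sel_min None isT) _; rewrite /dec_cost big1 // => i _; rewrite mul0r.
apply: (@le_trans _ _ (d * \sum_(i < m) (Zj i)%:R)); first by rewrite mulrC ler_wnM2l.
rewrite mulr_sumr; apply: ler_sum => i _.
have [iS|iNS] := boolP (i \in S j); last by rewrite Zj_S // !mulr0.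
by rewrite ler_wpM2r ?ler0n // -dec_cost_Some sel_min.
Qed.

(* One [linear_regret_le] bound per dual coordinate, for comparators in
   [[-L K, L K]]. *)
Definition ogd_bound (L : R) : R :=
  \sum_(k' : 'I_K | (k <= k')%N) \sum_(i < m)
     ((mu1 k' i ^+ 2 + (L * K%:R) ^+ 2) / eta + eta * N%:R / 2).

Section Path.
Variable w : arrivals.

Definition zk := Zbefore eta mu1 selX selA w k.
Definition stp s := reset N mu1 (k * N + s) (state w (k * N + s)).
Definition mup s := smu (stp s).
Definition ap s := selA (k * N + s) k zk (mup s).
Definition xp s k' := xsel selX w (k * N + s) (stp s) k'.
Definition jp (s : 'I_N) : 'I_n := w (period_ord s).

Lemma arrv_jp (s : 'I_N) : arrv w (k * N + s) = Some (jp s).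
Proof. exact: (arrv_ord w (period_ord s)). Qed.

Lemma arrv_jp_eq (s : 'I_N) j : (arrv w (k * N + s) == Some j) = (jp s == j).
Proof. by rewrite arrv_jp (inj_eq (@Some_inj _)). Qed.

Lemma zk_bound i : 0 <= zk i <= (k * N)%N%:R.
Proof. exact: usage_bound. Qed.

Lemma ap_box s (k' : 'I_K) i : (k <= k')%N -> 0 <= ap s k' i <= 1.
Proof. by move=> hk; have [box _] := hA (k * N + s) (mup s) zk_bound; apply: box. Qed.

Definition load (a : 'I_K -> 'I_m -> R) (k' : 'I_K) (i : 'I_m) : R :=
  zk i / (k'.+1 * N)%N%:R + \sum_(k'' : 'I_K | (k <= k'' <= k')%N) a k'' i / k'.+1%:R.

Definition penalty (a : 'I_K -> 'I_m -> R) : R :=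
  \sum_(k' : 'I_K | (k <= k')%N) k'.+1%:R * \sum_(i < m) g k' i (load a k' i).

Lemma dual_value_period (s : 'I_N) :
  dual_value zk (mup s) (jp s) =
    \sum_(k' : 'I_K | (k <= k')%N) \sum_(i < m) xvec R (xp s k') i * (c (jp s) i - mup s k' i)
    + penalty (ap s)
    + \sum_(k' : 'I_K | (k <= k')%N) \sum_(i < m) mup s k' i * ap s k' i.
Proof.
rewrite /dual_value -(aobj_sel (mup s) (k * N + s) zk_bound) /aobj addrA.
congr (_ + _ + _); apply: eq_bigr => k' _.
by rewrite -(dec_cost_sel _ _ (k * N + s)) /xp /xsel arrv_jp.
Qed.

Definition proxy_cost : R :=
  \sum_(s < N) \sum_(k' : 'I_K | (k <= k')%N) \sum_(i < m) xvec R (xp s k') i * c (jp s) i.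

Definition proxy_load (k' : 'I_K) (i : 'I_m) : R :=
  (zk i + Ztil eta mu1 selX selA w k k' i) / (k'.+1 * N)%N%:R.

Definition proxy_penalty : R :=
  \sum_(k' : 'I_K | (k <= k')%N) \sum_(i < m) k'.+1%:R * g k' i (proxy_load k' i).

Lemma ZtilJ_period j i : ZtilJ eta mu1 selX selA w k j i =
  \sum_(s < N) (jp s == j)%:R * \sum_(k' : 'I_K | (k <= k')%N) xvec R (xp s k') i.
Proof.
rewrite /ZtilJ big_nat_epoch; apply: eq_bigr => s _.
by rewrite arrv_jp_eq mulr_sumr; apply: eq_bigr => k' _; rewrite mulrC.
Qed.

Lemma Ztil_period (k' : 'I_K) i : Ztil eta mu1 selX selA w k k' i =
  \sum_(s < N) \sum_(k'' : 'I_K | (k <= k'' <= k')%N) xvec R (xp s k'') i.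
Proof.
rewrite /Ztil; under eq_bigr do rewrite big_nat_epoch.
rewrite exchange_big; apply: eq_bigr => s _; rewrite exchange_big; apply: eq_bigr => k'' _.
by under eq_bigr do rewrite arrv_jp_eq; rewrite -mulr_sumr sum_eq1 mulr1.
Qed.

Lemma Vpi_split : Vpi c g eta mu1 selX selA w k zk = proxy_cost + N%:R * proxy_penalty.
Proof.
rewrite /Vpi; congr (_ + _).
under eq_bigr => j _ do under eq_bigr => i _ do rewrite ZtilJ_period mulr_sumr.
rewrite /proxy_cost; under eq_bigr => j _ do rewrite exchange_big /=.
rewrite exchange_big; apply: eq_bigr => s _.
rewrite exchange_big [RHS]exchange_big; apply: eq_bigr => i _.
set X := \sum_(k' : 'I_K | _) xvec R (xp s k') i.
transitivity (c (jp s) i * X); last by rewrite mulr_sumr; apply: eq_bigr => k' _; rewrite mulrC.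
rewrite -(sum_mul_eq (fun j => c j i * X) (jp s)).
by apply: eq_bigr => j _; rewrite mulrCA mulrC.
Qed.

Definition arrival_count (j : 'I_n) : R := \sum_(s < N) (jp s == j)%:R.

Lemma Lam_count j : (Lam w k j)%:R = arrival_count j.
Proof. by rewrite /Lam natr_sum big_nat_epoch; apply: eq_bigr => s _; rewrite arrv_jp_eq. Qed.

Lemma sum_arrival_count : \sum_(j < n) arrival_count j = N%:R.
Proof.
rewrite exchange_big -[N in N%:R]card_ord -sumr_const.
by apply: eq_bigr => s _; rewrite sum_eq1.
Qed.

Lemma sum_dual_value z nu :
  \sum_(s < N) dual_value z nu (jp s) =
  \sum_(k' : 'I_K | (k <= k')%N) \sum_(j < n)
     arrival_count j * dec_cost c j (nu k') (selX 0 k' j (nu k'))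
  + N%:R * aobj N g k z nu (selA 0 k z nu).
Proof.
rewrite big_split /= sumr_const card_ord mulr_natl; congr (_ + _).
rewrite exchange_big; apply: eq_bigr => k' _.
under [RHS]eq_bigr => j _ do rewrite /arrival_count mulr_suml.
rewrite [RHS]exchange_big; apply: eq_bigr => s _.
by under eq_bigr do rewrite mulrC; rewrite sum_mul_eq.
Qed.

Definition assigned (Z : {ffun 'I_K * 'I_n * 'I_m -> 'I_N.+1}) (k' : 'I_K) (i : 'I_m) : R :=
  \sum_(j < n) (Z (k', j, i) : nat)%:R.

(* The offline objective, with the dual [nu] added and subtracted: the linear
   part becomes reduced costs and the rest is the [a]-objective at [assigned / N]. *)
Lemma offobj_lagrangian z nu (Z : {ffun 'I_K * 'I_n * 'I_m -> 'I_N.+1}) :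
  offobj c g k z Z =
  \sum_(k' : 'I_K | (k <= k')%N) \sum_(j < n) \sum_(i < m)
     (c j i - nu k' i) * (Z (k', j, i) : nat)%:R
  + N%:R * aobj N g k z nu (fun k' i => assigned Z k' i / N%:R).
Proof.
have N_neq0 : N%:R != 0 :> R by rewrite lt0r_neq0 ?N_pos.
have cost : \sum_(j < n) \sum_(i < m) c j i * \sum_(k' : 'I_K | (k <= k')%N) (Z (k', j, i) : nat)%:R
    = \sum_(k' : 'I_K | (k <= k')%N) \sum_(j < n) \sum_(i < m) c j i * (Z (k', j, i) : nat)%:R.
  under eq_bigr => j _ do under eq_bigr => i _ do rewrite mulr_sumr.
  by under eq_bigr => j _ do rewrite exchange_big; rewrite exchange_big.
have dual : N%:R * \sum_(k' : 'I_K | (k <= k')%N) \sum_(i < m) nu k' i * (assigned Z k' i / N%:R)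
    = \sum_(k' : 'I_K | (k <= k')%N) \sum_(j < n) \sum_(i < m) nu k' i * (Z (k', j, i) : nat)%:R.
  rewrite mulr_sumr; apply: eq_bigr => k' _; rewrite mulr_sumr exchange_big.
  by apply: eq_bigr => i _; rewrite -mulr_sumr /assigned; field.
have reduced : \sum_(k' : 'I_K | (k <= k')%N) \sum_(j < n) \sum_(i < m)
      (c j i - nu k' i) * (Z (k', j, i) : nat)%:R
    = \sum_(k' : 'I_K | (k <= k')%N) \sum_(j < n) \sum_(i < m) c j i * (Z (k', j, i) : nat)%:R
      - \sum_(k' : 'I_K | (k <= k')%N) \sum_(j < n) \sum_(i < m) nu k' i * (Z (k', j, i) : nat)%:R.
  rewrite -sumrB; apply: eq_bigr => k' _; rewrite -sumrB; apply: eq_bigr => j _.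
  by rewrite -sumrB; apply: eq_bigr => i _; rewrite mulrBl.
have g_part : \sum_(k' : 'I_K | (k <= k')%N) \sum_(i < m) k'.+1%:R *
      g k' i ((z i + \sum_(j < n) \sum_(k'' : 'I_K | (k <= k'' <= k')%N) (Z (k'', j, i) : nat)%:R)
              / (k'.+1 * N)%N%:R)
    = \sum_(k' : 'I_K | (k <= k')%N) k'.+1%:R * \sum_(i < m) g k' i (z i / (k'.+1 * N)%N%:R
        + \sum_(k'' : 'I_K | (k <= k'' <= k')%N) assigned Z k'' i / N%:R / k'.+1%:R).
  apply: eq_bigr => k' _; rewrite mulr_sumr; apply: eq_bigr => i _; congr (_ * g k' i _).
  rewrite exchange_big -!mulr_suml natrM.
  by field; rewrite N_neq0 natrS_neq0.
rewrite /offobj /aobj mulrDr cost g_part dual reduced; ring.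
Qed.

Lemma off_feasibleP Z (k' : 'I_K) j : off_feasible S w k Z -> (k <= k')%N ->
  (forall i, i \notin S j -> (Z (k', j, i) : nat) = 0%N) /\
  \sum_(i < m) ((Z (k', j, i) : nat)%:R : R) <= arrival_count j.
Proof.
move=> /forallP /(_ k') /implyP hZ /hZ /forallP /(_ j) /andP [/forallP Z_S Z_le].
split=> [i iNS|]; first exact/eqP/(implyP (Z_S i)).
by rewrite -Lam_count -natr_sum ler_nat.
Qed.

Lemma assigned_box Z : off_feasible S w k Z -> in_box k (fun k' i => assigned Z k' i / N%:R).
Proof.
move=> hZ k' i hk; have assigned_ge0 : 0 <= assigned Z k' i by apply: sumr_ge0.
rewrite divr_ge0 ?(ltW N_pos) //= ler_pdivrMr ?N_pos // mul1r -sum_arrival_count.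
apply: ler_sum => j _; apply: le_trans (off_feasibleP j hZ hk).2.
by rewrite (bigD1 i) //= lerDl sumr_ge0.
Qed.

Lemma sum_dual_value_le_offobj z nu Z : (forall i, 0 <= z i <= (k * N)%N%:R) ->
  off_feasible S w k Z -> \sum_(s < N) dual_value z nu (jp s) <= offobj c g k z Z.
Proof.
move=> hz hZ; rewrite sum_dual_value (offobj_lagrangian _ nu) lerD //.
  apply: ler_sum => k' hk; apply: ler_sum => j _.
  by have [Z_S Z_le] := off_feasibleP j hZ hk; apply: scaled_dec_cost_le.
by rewrite ler_pM2l ?N_pos //; apply: (hA 0 nu hz).2; apply: assigned_box.
Qed.

Lemma sum_dual_value_le_Voff z nu : (forall i, 0 <= z i <= (k * N)%N%:R) ->
  \sum_(s < N) dual_value z nu (jp s) <= Voff c S g w k z.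
Proof.
move=> hz; have le_off := sum_dual_value_le_offobj nu hz.
apply: (big_ind (fun v => _ <= v)) => [||Z /le_off //]; last first.
  by move=> x y hx hy; rewrite le_min hx hy.
apply: le_off; apply/forallP => k'; apply/implyP => _; apply/forallP => j.
rewrite big1 => [|i _]; last by rewrite ffunE.
by apply/andP; split => //; apply/forallP => i; rewrite ffunE implybT.
Qed.

Lemma load01 (a : 'I_K -> 'I_m -> R) (k' : 'I_K) i :
  (forall k'' : 'I_K, (k <= k'')%N -> 0 <= a k'' i <= 1) -> (k <= k')%N ->
  0 <= load a k' i <= 1.
Proof.
move=> a01 hk; have k1_pos : 0 < k'.+1%:R :> R by rewrite ltr0n.
have /andP[z_ge0 z_le] := zk_bound i.
have A_le := sum_window_le k' a01.
have A_ge0 : 0 <= \sum_(k'' : 'I_K | (k <= k'' <= k')%N) a k'' i.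
  by apply: sumr_ge0 => k'' /andP[hk'' _]; case/andP: (a01 k'' hk'').
rewrite /load -mulr_suml natrM.
set A := \sum_(k'' : 'I_K | _) _ in A_le A_ge0 *.
have -> : zk i / (k'.+1%:R * N%:R) + A / k'.+1%:R = (zk i / N%:R + A) / k'.+1%:R.
  by field; rewrite natrS_neq0 lt0r_neq0 ?N_pos.
have zN_le : zk i / N%:R <= k%:R by rewrite ler_pdivrMr ?N_pos // -natrM.
rewrite divr_ge0 ?addr_ge0 ?divr_ge0 ?(ltW N_pos) ?(ltW k1_pos) //=.
rewrite ler_pdivrMr // mul1r; move: A_le; rewrite natrB ?(leqW hk) //.
have : k%:R <= k'.+1%:R :> R by rewrite ler_nat ltnW.
lra.
Qed.

Lemma proxy_load01 (k' : 'I_K) i : (k <= k')%N -> 0 <= proxy_load k' i <= 1.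
Proof.
move=> hk; have /andP[z_ge0 z_le] := zk_bound i.
have Ztil_ge0 : 0 <= Ztil eta mu1 selX selA w k k' i.
  rewrite Ztil_period; apply: sumr_ge0 => s _; apply: sumr_ge0 => k'' _.
  by case/andP: (xvec01 (xp s k'') i).
have Ztil_le : Ztil eta mu1 selX selA w k k' i <= N%:R * (k'.+1%:R - k%:R).
  rewrite Ztil_period -natrB ?(leqW hk) // -[N in N%:R]card_ord mulr_natl -sumr_const.
  by apply: ler_sum => s _; apply: sum_window_le => k'' _; apply: xvec01.
have kN_pos : 0 < k'.+1%:R * N%:R :> R by rewrite mulr_gt0 ?ltr0n ?N_pos.
rewrite /proxy_load natrM divr_ge0 ?addr_ge0 ?(ltW kN_pos) //= ler_pdivrMr // mul1r.
move: z_le; rewrite natrM; lra.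
Qed.

Definition proxy_gap (k'' : 'I_K) (i : 'I_m) : R :=
  \sum_(s < N) (xvec R (xp s k'') i - ap s k'' i).

Lemma proxy_load_gap (k' : 'I_K) i :
  k'.+1%:R * N%:R * (proxy_load k' i - (\sum_(s < N) load (ap s) k' i) / N%:R)
  = \sum_(k'' : 'I_K | (k <= k'' <= k')%N) proxy_gap k'' i.
Proof.
have sum_gap : \sum_(k'' : 'I_K | (k <= k'' <= k')%N) proxy_gap k'' i
  = Ztil eta mu1 selX selA w k k' i
    - \sum_(s < N) \sum_(k'' : 'I_K | (k <= k'' <= k')%N) ap s k'' i.
  by rewrite Ztil_period /proxy_gap exchange_big -sumrB; apply: eq_bigr => s _; rewrite sumrB.
rewrite sum_gap /proxy_load /load big_split /= sumr_const card_ord -mulr_natl.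
under [X in _ * (_ - (_ + X) / _)]eq_bigr => s _ do rewrite -mulr_suml.
rewrite -mulr_suml natrM.
by field; rewrite natrS_neq0 lt0r_neq0 ?N_pos.
Qed.

Definition gap_norm : R := \sum_(k'' : 'I_K | (k <= k'')%N) \sum_(i < m) `|proxy_gap k'' i|.

Definition dual_drift : R :=
  \sum_(s < N) \sum_(k' : 'I_K | (k <= k')%N) \sum_(i < m)
     mup s k' i * (xvec R (xp s k') i - ap s k' i).

Lemma sum_dual_value_period :
  \sum_(s < N) dual_value zk (mup s) (jp s) =
  proxy_cost + \sum_(s < N) penalty (ap s) - dual_drift.
Proof.
under eq_bigr => s _ do rewrite dual_value_period.
rewrite /proxy_cost /dual_drift addrAC -sumrB -big_split; apply: eq_bigr => s _.
rewrite addrAC; congr (_ + _).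
rewrite -sumrB -big_split; apply: eq_bigr => k' _.
by rewrite -sumrB -big_split; apply: eq_bigr => i _ /=; ring.
Qed.

Section Regret.
Variable L : R.
Hypotheses (g_lip : forall k' i, lipschitz01 L (g k' i))
           (g_cvx : forall k' i, convex01 (g k' i)).

(* Jensen over the periods for [g], then Lipschitz continuity to pass from
   the average load of the [a^t] to the proxy load. *)
Lemma penalty_gap_le (k' : 'I_K) i : (k <= k')%N ->
  N%:R * (k'.+1%:R * g k' i (proxy_load k' i))
    - k'.+1%:R * \sum_(s < N) g k' i (load (ap s) k' i)
  <= L * \sum_(k'' : 'I_K | (k <= k'')%N) `|proxy_gap k'' i|.
Proof.
move=> hk; have k1_pos : 0 < k'.+1%:R :> R by rewrite ltr0n.
have load_01 s : (s < N)%N -> 0 <= load (ap s) k' i <= 1.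
  by move=> _; apply: load01 => // k'' hk''; apply: ap_box.
set y := proxy_load k' i; set yb := (\sum_(s < N) load (ap s) k' i) / N%:R.
have jensen := convex01_avg_le (g_cvx k' i) load_01; rewrite -/yb in jensen.
have yb01 : 0 <= yb <= 1.
  have /andP[? ?] := sum01_le load_01.
  by rewrite /yb divr_ge0 ?ler_pdivrMr ?mul1r ?(ltW N_pos) ?N_pos.
have lip := g_lip k' i (proxy_load01 i hk) yb01.
have L_ge0 := lipschitz01_ge0 (g_lip k' i).
have window_le : `|\sum_(k'' : 'I_K | (k <= k'' <= k')%N) proxy_gap k'' i|
                 <= \sum_(k'' : 'I_K | (k <= k'')%N) `|proxy_gap k'' i|.
  apply: le_trans (ler_norm_sum _ _ _) _.
  rewrite [X in _ <= X](bigID (fun k'' : 'I_K => (k'' <= k')%N)) /= lerDl.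
  by apply: sumr_ge0 => ? _.
have kN_ge0 : 0 <= k'.+1%:R * N%:R :> R by rewrite mulr_ge0 ?ler0n.
have : k'.+1%:R * N%:R * (g k' i y - g k' i yb) <= L * `|k'.+1%:R * N%:R * (y - yb)|.
  rewrite normrM (ger0_norm kN_ge0) mulrCA ler_wpM2l //.
  exact: le_trans (ler_norm _) lip.
rewrite proxy_load_gap -(ler_pM2l k1_pos) in jensen *.
move: window_le => /(ler_wpM2l L_ge0); lra.
Qed.

Lemma penalty_le : N%:R * proxy_penalty - \sum_(s < N) penalty (ap s) <= L * K%:R * gap_norm.
Proof.
have sum_penalty : \sum_(s < N) penalty (ap s) = \sum_(k' : 'I_K | (k <= k')%N) \sum_(i < m)
    k'.+1%:R * \sum_(s < N) g k' i (load (ap s) k' i).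
  rewrite /penalty exchange_big; apply: eq_bigr => k' _.
  by rewrite -mulr_sumr exchange_big mulr_sumr.
rewrite sum_penalty /proxy_penalty mulr_sumr -sumrB.
set bound := \sum_(i < m) L * \sum_(k'' : 'I_K | (k <= k'')%N) `|proxy_gap k'' i|.
apply: (@le_trans _ _ (\sum_(k' : 'I_K | (k <= k')%N) bound)).
  apply: ler_sum => k' hk; rewrite mulr_sumr -sumrB; apply: ler_sum => i _.
  exact: penalty_gap_le.
have bound_ge0 : 0 <= bound.
  apply: sumr_ge0 => i _; rewrite mulr_ge0 ?sumr_ge0 //.
  exact: lipschitz01_ge0 (g_lip (Ordinal k_lt_K) i).
apply: (@le_trans _ _ (\sum_(k' : 'I_K) bound)).
  by rewrite [X in _ <= X](bigID (fun k' : 'I_K => (k <= k')%N)) /= lerDl sumr_ge0.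
rewrite sumr_const card_ord /bound /gap_norm -mulr_sumr exchange_big.
by rewrite -mulrnAl -mulr_natr.
Qed.

Hypothesis eta_gt0 : 0 < eta.

(* The duals are gradient steps on the linear losses [mu |-> mu (a^t - x~^t)]. *)
Lemma dual_gap_le (k' : 'I_K) i : (k <= k')%N ->
  L * K%:R * `|proxy_gap k' i| + \sum_(s < N) mup s k' i * (xvec R (xp s k') i - ap s k' i)
  <= (mu1 k' i ^+ 2 + (L * K%:R) ^+ 2) / eta + eta * N%:R / 2.
Proof.
move=> hk; pose G s := ap s k' i - xvec R (xp s k') i.
have step s : (s < N)%N -> dual_seq w k' i s.+1 = dual_seq w k' i s + eta * G s.
  by move=> hs; rewrite (dual_seq_step w i hs hk).
have G1 s : (s < N)%N -> -1 <= G s <= 1.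
  by move=> _; have := ap_box s i hk; have := xvec01 (xp s k') i; rewrite /G; lra.
have LK_ge0 : 0 <= L * K%:R by rewrite mulr_ge0 ?ler0n ?(lipschitz01_ge0 (g_lip k' i)).
have := linear_regret_le eta_gt0 LK_ge0 step G1.
have -> : dual_seq w k' i 0 = mu1 k' i by [].
have -> : `|proxy_gap k' i| = `|\sum_(s < N) G s|.
  by rewrite /proxy_gap -normrN -sumrN; congr `|_|; apply: eq_bigr => s _; rewrite opprB.
have -> : \sum_(s < N) mup s k' i * (xvec R (xp s k') i - ap s k' i)
        = - \sum_(s < N) dual_seq w k' i s * G s.
  rewrite -sumrN; apply: eq_bigr => s _.
  by rewrite /mup /stp (reset_dual_epoch w i (ltn_ord s) hk) /G -mulrN opprB.
lra.
Qed.

Lemma dual_terms_le : L * K%:R * gap_norm + dual_drift <= ogd_bound L.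
Proof.
have -> : dual_drift = \sum_(k' : 'I_K | (k <= k')%N) \sum_(i < m)
    \sum_(s < N) mup s k' i * (xvec R (xp s k') i - ap s k' i).
  by rewrite /dual_drift exchange_big; apply: eq_bigr => k' _; rewrite exchange_big.
rewrite /gap_norm mulr_sumr -big_split; apply: ler_sum => k' hk /=.
by rewrite mulr_sumr -big_split; apply: ler_sum => i _ /=; apply: dual_gap_le.
Qed.

Lemma Vpi_le_sum_dual_value :
  Vpi c g eta mu1 selX selA w k zk <= \sum_(s < N) dual_value zk (mup s) (jp s) + ogd_bound L.
Proof.
rewrite Vpi_split sum_dual_value_period.
by have := penalty_le; have := dual_terms_le; lra.
Qed.

End Regret.

End Path.

Definition dual_avg (mus : nat -> 'I_K -> 'I_m -> R) (k' : 'I_K) (i : 'I_m) : R :=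
  (\sum_(s < N) mus s k' i) / N%:R.

Lemma dec_cost_avg j o (mus : nat -> 'I_K -> 'I_m -> R) (k' : 'I_K) :
  \sum_(s < N) dec_cost c j (mus s k') o = N%:R * dec_cost c j (dual_avg mus k') o.
Proof.
rewrite /dec_cost exchange_big mulr_sumr; apply: eq_bigr => i _.
rewrite -mulr_sumr sumrB sumr_const card_ord -mulr_natl /dual_avg.
by field; rewrite lt0r_neq0 ?N_pos.
Qed.

Lemma aobj_avg z (mus : nat -> 'I_K -> 'I_m -> R) a :
  \sum_(s < N) aobj N g k z (mus s) a = N%:R * aobj N g k z (dual_avg mus) a.
Proof.
rewrite /aobj big_split /= sumr_const card_ord mulrDr mulr_natl; congr (_ + _).
rewrite exchange_big mulr_sumr; apply: eq_bigr => k' _.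
rewrite exchange_big mulr_sumr; apply: eq_bigr => i _.
by rewrite -mulr_suml /dual_avg; field; rewrite lt0r_neq0 ?N_pos.
Qed.

(* A minimum of functions affine in the dual is concave. *)
Lemma dual_value_concave z (mus : nat -> 'I_K -> 'I_m -> R) j :
  (forall i, 0 <= z i <= (k * N)%N%:R) ->
  \sum_(s < N) dual_value z (mus s) j <= N%:R * dual_value z (dual_avg mus) j.
Proof.
move=> hz; set mb := dual_avg mus.
rewrite /dual_value mulrDr -aobj_avg mulr_sumr big_split /=.
apply: lerD; last first.
  apply: ler_sum => s _; have [_ a_min] := hA 0 (mus s) hz.
  by apply: a_min; have [a_box _] := hA 0 mb hz.
rewrite exchange_big; apply: ler_sum => k' _; rewrite -dec_cost_avg.
apply: ler_sum => s _; have [_ x_min] := hX 0 k' j (mus s k').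
by apply: x_min; have [x_ok _] := hX 0 k' j (mb k').
Qed.

Section Expectation.
Variable p : 'I_n -> R.
Hypotheses (p_ge0 : forall j, 0 <= p j) (p_sum1 : \sum_(j < n) p j = 1).

Lemma arrv_upd (w : arrivals) t0 j t : t != val t0 -> arrv (upd w t0 j) t = arrv w t.
Proof.
rewrite /arrv; case: insubP => [u _ <-|_] //= ht.
by rewrite ffunE; case: eqVneq => // eq_ut0; rewrite eq_ut0 eqxx in ht.
Qed.

Lemma state_upd (w : arrivals) (t0 : 'I_(K * N)) j t :
  (t <= t0)%N -> state (upd w t0 j) t = state w t.
Proof.
move=> le_tt0; apply: run_prefix => s lt_st; apply: arrv_upd.
by rewrite neq_ltn (leq_trans lt_st le_tt0).
Qed.

Lemma zk_upd (w : arrivals) (t0 : 'I_(K * N)) j : (k * N <= t0)%N -> zk (upd w t0 j) = zk w.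
Proof. by move=> le_t0; rewrite /zk /Zbefore state_upd. Qed.

Lemma mup_upd (w : arrivals) s (t0 : 'I_(K * N)) j : (k * N + s <= t0)%N ->
  mup (upd w t0 j) s = mup w s.
Proof. by move=> le_t0; rewrite /mup /stp state_upd. Qed.

Definition agree_before (w w' : arrivals) : bool :=
  [forall t : 'I_(K * N), (t < k * N)%N ==> (w t == w' t)].

Lemma agree_before_refl w : agree_before w w.
Proof. by apply/forallP => t; apply/implyP. Qed.

Definition expected_dual (w w' : arrivals) : R :=
  \sum_(j < n) p j * dual_value (zk w) (dual_avg (mup w')) j.

Definition is_best (w w' : arrivals) : bool :=
  agree_before w w'
  && [forall w'', agree_before w w'' ==> (expected_dual w w'' <= expected_dual w w')].

Lemma exists_best w : exists w', is_best w w'.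
Proof.
have [w' agree_w' w'_max] :=
  @arg_maxP _ _ _ w (agree_before w) (expected_dual w) (agree_before_refl w).
exists w'; rewrite /is_best agree_w'; apply/forallP => w''; apply/implyP; exact: w'_max.
Qed.

(* The best average dual among the arrival sequences sharing the history of
   [w] before epoch [k]: unlike the online duals, it does not depend on the
   arrivals of epoch [k]. *)
Definition best_dual w := dual_avg (mup (xchoose (exists_best w))).

Lemma best_dual_max w : expected_dual w w <= expected_dual w (xchoose (exists_best w)).
Proof.
have /andP[_ /forallP /(_ w) /implyP] := xchooseP (exists_best w).
by apply; apply: agree_before_refl.
Qed.

Lemma best_dual_upd w (t0 : 'I_(K * N)) j :
  (k * N <= t0)%N -> best_dual (upd w t0 j) = best_dual w.
Proof.
move=> le_t0; have agreeE w'' : agree_before (upd w t0 j) w'' = agree_before w w''.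
  apply: eq_forallb => t; rewrite ffunE.
  by case: (eqVneq t t0) => [->|//]; rewrite ltnNge le_t0.
have expected_dualE w'' : expected_dual (upd w t0 j) w'' = expected_dual w w''.
  by rewrite /expected_dual zk_upd.
rewrite /best_dual; congr (dual_avg (mup _)); apply: eq_xchoose => w'.
rewrite /is_best agreeE expected_dualE; congr (_ && _).
by apply: eq_forallb => w''; rewrite agreeE !expected_dualE.
Qed.

Lemma expect_sum_indep (F : 'I_N -> arrivals -> 'I_n -> R) :
  (forall s w j j', F s (upd w (period_ord s) j') j = F s w j) ->
  expect p (fun w => \sum_(s < N) F s w (jp w s))
  = expect p (fun w => \sum_(j < n) p j * \sum_(s < N) F s w j).
Proof.
move=> F_indep; rewrite expect_sum.
under eq_bigr => s _ do rewrite (expect_indep p_sum1 (F_indep s)).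
rewrite -expect_sum; apply: eq_bigr => w _; congr (_ * _).
by rewrite exchange_big; apply: eq_bigr => j _; rewrite mulr_sumr.
Qed.

Lemma expect_online_le_best :
  expect p (fun w => \sum_(s < N) dual_value (zk w) (mup w s) (jp w s))
  <= expect p (fun w => \sum_(s < N) dual_value (zk w) (best_dual w) (jp w s)).
Proof.
rewrite (expect_sum_indep (F := fun s w j => dual_value (zk w) (mup w s) j)); last first.
  by move=> s w j j'; rewrite zk_upd ?mup_upd ?leq_addr.
rewrite (expect_sum_indep (F := fun s w j => dual_value (zk w) (best_dual w) j)); last first.
  by move=> s w j j'; rewrite zk_upd ?best_dual_upd ?leq_addr.
apply: ler_expect => // w.
apply: (@le_trans _ _ (N%:R * expected_dual w w)).
  rewrite /expected_dual mulr_sumr; apply: ler_sum => j _; rewrite mulrCA ler_wpM2l //.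
  exact: dual_value_concave (zk_bound w).
apply: (@le_trans _ _ (N%:R * expected_dual w (xchoose (exists_best w)))).
  by rewrite ler_wpM2l ?ler0n ?best_dual_max.
rewrite /expected_dual mulr_sumr; apply: ler_sum => j _.
by rewrite sumr_const card_ord mulrnAr mulr_natl.
Qed.

Section Bound.
Variable L : R.
Hypotheses (g_lip : forall k' i, lipschitz01 L (g k' i))
           (g_cvx : forall k' i, convex01 (g k' i)) (eta_gt0 : 0 < eta).

Lemma exp_proxy_reg_le : exp_proxy_reg N c S g p eta mu1 selX selA k <= ogd_bound L.
Proof.
change (expect p (fun w : arrivals => proxy_reg c S g eta mu1 selX selA w k) <= ogd_bound L).
apply: (@le_trans _ _ (expect p (fun w : arrivals =>
   \sum_(s < N) dual_value (zk w) (mup w s) (jp w s) + ogd_bound L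
   - Voff c S g w k (zk w)))).
  apply: ler_expect => // w; rewrite /proxy_reg -/(zk w) lerB //.
  exact: Vpi_le_sum_dual_value.
rewrite expectB expectD (expect_cst _ p_sum1); have := expect_online_le_best.
have : expect p (fun w => \sum_(s < N) dual_value (zk w) (best_dual w) (jp w s))
       <= expect p (fun w => Voff c S g w k (zk w)).
  by apply: ler_expect => // w; apply: sum_dual_value_le_Voff; apply: zk_bound.
lra.
Qed.

End Bound.
End Expectation.

End Epoch.
End Dynamics.

Lemma ogd_bound_le (R : realType) m K N (eta : R) (mu1 : 'I_K -> 'I_m -> R) k L (c1 c2 : R) :
  (0 < N)%N -> 0 < c1 -> c1 / Num.sqrt N%:R <= eta -> eta <= c2 / Num.sqrt N%:R ->
  ogd_bound N eta mu1 k L <=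
  (\sum_(k' : 'I_K) \sum_(i < m) ((mu1 k' i ^+ 2 + (L * K%:R) ^+ 2) / c1 + c2 / 2))
  * Num.sqrt N%:R.
Proof.
move=> N_gt0 c1_gt0 eta_lo eta_hi; set q := Num.sqrt N%:R.
have q_gt0 : 0 < q by rewrite sqrtr_gt0 ltr0n.
have c2_ge0 : 0 <= c2.
  have : 0 < c2 / q by apply: lt_le_trans eta_hi; apply: lt_le_trans eta_lo; apply: divr_gt0.
  by rewrite pmulr_lgt0 ?invr_gt0 // => /ltW.
rewrite mulr_suml (bigID (fun k' : 'I_K => (k <= k')%N)) /= -[ogd_bound _ _ _ _ _]addr0.
apply: lerD; last first.
  apply: sumr_ge0 => k' _; rewrite mulr_suml; apply: sumr_ge0 => i _.
  by rewrite mulr_ge0 ?(ltW q_gt0) // addr_ge0 ?divr_ge0 ?addr_ge0 ?sqr_ge0 ?(ltW c1_gt0).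
apply: ler_sum => k' _; rewrite mulr_suml; apply: ler_sum => i _.
rewrite -[N%:R](@sqr_sqrtr _ N%:R) ?ler0n // -/q [X in _ <= X]mulrC.
by apply: stepsize_tradeoff_le => //; rewrite addr_ge0 ?sqr_ge0.
Qed.

Theorem lemma4 (R : realType) (m n K : nat)
  (c : 'I_n -> 'I_m -> R) (S : 'I_n -> {set 'I_m}) (p : 'I_n -> R)
  (rho : 'I_K -> 'I_m -> R) (g : 'I_K -> 'I_m -> R -> R) (L : R)
  (mu1 : 'I_K -> 'I_m -> R) (eta : nat -> R) (c1 c2 : R) (N1 : nat) :
  (0 < K)%N ->
  (forall j, 0 <= p j) -> \sum_(j < n) p j = 1 ->
  (forall k i, 0 <= rho k i <= 1) ->
  (forall k i, g k i (rho k i) = 0) ->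
  (forall k i x, 0 <= x <= 1 -> 0 <= g k i x) ->
  (forall k i x y, 0 <= x <= 1 -> 0 <= y <= 1 ->
     `|g k i x - g k i y| <= L * `|x - y|) ->
  (forall k i x y l, 0 <= x <= 1 -> 0 <= y <= 1 -> 0 <= l <= 1 ->
     g k i (l * x + (1 - l) * y) <= l * g k i x + (1 - l) * g k i y) ->
  (* stepsize eta_T = Theta(sqrt(K/T)), T = K * N *)
  0 < c1 -> c1 <= c2 ->
  (forall N, (N1 <= N)%N ->
     c1 * Num.sqrt (K%:R / (K * N)%N%:R) <= eta N <= c2 * Num.sqrt (K%:R / (K * N)%N%:R)) ->
  forall k : 'I_K,
  exists C : R, exists N0 : nat,
  forall N : nat, (N0 <= N)%N ->
  forall (selX : nat -> 'I_K -> 'I_n -> ('I_m -> R) -> option 'I_m)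
         (selA : nat -> nat -> ('I_m -> R) -> ('I_K -> 'I_m -> R) -> ('I_K -> 'I_m -> R)),
    is_xsel c S selX ->
    is_asel N g selA ->
    exp_proxy_reg N c S g p (eta N) mu1 selX selA k
      <= C * Num.sqrt ((K * N)%N%:R / K%:R).
Proof.
move=> K_gt0 p_ge0 p_sum1 _ _ _ g_lip g_cvx c1_gt0 _ eta_bound k.
exists (\sum_(k' : 'I_K) \sum_(i < m) ((mu1 k' i ^+ 2 + (L * K%:R) ^+ 2) / c1 + c2 / 2)).
exists (maxn N1 1); move=> N; rewrite geq_max => /andP[N1_le N_gt0] selX selA hX hA.
have K_neq0 : K%:R != 0 :> R by rewrite pnatr_eq0 -lt0n.
have -> : (K * N)%N%:R / K%:R = N%:R :> R by rewrite natrM mulrAC divff ?mul1r.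
have K_KN : K%:R / (K * N)%N%:R = N%:R^-1 :> R by rewrite natrM invfM mulrA divff ?mul1r.
have /andP[eta_lo eta_hi] := eta_bound N N1_le.
rewrite K_KN sqrtrV ?ler0n // in eta_lo eta_hi.
have eta_gt0 : 0 < eta N.
  by apply: lt_le_trans eta_lo; rewrite mulr_gt0 ?invr_gt0 ?sqrtr_gt0 ?ltr0n.
apply: le_trans (exp_proxy_reg_le mu1 (ltn_ord k) N_gt0 hX hA p_ge0 p_sum1 g_lip g_cvx eta_gt0) _.
exact: ogd_bound_le.
Qed.
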